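(* Let $c\in(0,\infty)$, $\lambda_\pm=(1\pm c^{-1/2})^2$, and for $x>\lambda_+$ let $$\mathcal T(x)=\frac{x-(1+c^{-1})-\sqrt{(x-\lambda_+)(x-\lambda_-)}}{2c^{-1}}.$$ Let $d_1>d_2>\dots>d_s>c^{-1/4}$, $p(d)=\frac{(d^2+1)(d^2+c^{-1})}{d^2}$, $p_i=p(d_i)$, and $T^s(x)=\prod_{i=1}^s(\mathcal T(x)-d_i^{-2})$. Then: (1) the equation $T^s(x)=0$ ($x>\lambda_+$) has $s$ solutions, namely $p_1,\dots,p_s$; (2) $T^s$ has $s-1$ critical points $x_1,\dots,x_{s-1}$ with $x_i\in(p_{i+1},p_i)$, $i=1,\dots,s-1$; (3) $\mathcal T$ is strictly decreasing on $(\lambda_+,\infty)$.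
   Context: $\mathcal T(x)$ equals $x\,m_{1c}(x)m_{2c}(x)$, where $m_{1c},m_{2c}$ are the Stieltjes transforms of the limiting (Marchenko–Pastur) spectral distributions of $XX^*$ and $X^*X$ with aspect ratio $N/M\to c$. *)

From Stdlib Require Import Reals Lra.
From Coquelicot Require Import Coquelicot.
Open Scope R_scope.

Definition lam_plus (c : R) : R := (1 + / sqrt c) ^ 2.
Definition lam_minus (c : R) : R := (1 - / sqrt c) ^ 2.

Definition calT (c x : R) : R :=
  (x - (1 + / c) - sqrt ((x - lam_plus c) * (x - lam_minus c))) / (2 * / c).

Definition pfun (c dd : R) : R := (dd ^ 2 + 1) * (dd ^ 2 + / c) / dd ^ 2.

Fixpoint Tprod (c : R) (d : nat -> R) (n : nat) (x : R) : R :=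
  match n with
  | O => 1
  | S m => Tprod c d m x * (calT c x - / (d (S m)) ^ 2)
  end.

(* With a = 1/c, the map h(t) = 1 + a + a t + 1/t is strictly decreasing on
   (0, sqrt c], sends sqrt c to lambda_+ and d^-2 to p(d), and T inverts it on
   (lambda_+, oo): T(x) is the smaller root of a t^2 - (x - 1 - a) t + 1 = 0.
   Hence T decreases and T^s = P o T with P(t) = prod_i (t - e_i), where the
   e_i = d_i^-2 increase inside (0, sqrt c).  As T' <> 0, the critical points
   of T^s are the h-images of those of P.  By Rolle P' vanishes in every gap
   (e_i, e_(i+1)); it vanishes nowhere else, since the roots are simple and
   P'/P = sum_i 1/(t - e_i) is negative below e_1, positive above e_s and
   strictly decreasing on each gap. *)

From Stdlib Require Import Reals Lra Lia ClassicalEpsilon FunctionalExtensionality.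
From Coquelicot Require Import Coquelicot.
Open Scope R_scope.

Lemma inv_sqrt_sqr c : 0 < c -> / c = (/ sqrt c) ^ 2.
Proof. intros Hc. rewrite pow_inv, pow2_sqrt; lra. Qed.

Lemma inv_sqr_bounds c dd : 0 < c -> Rpower c (- / 4) < dd -> 0 < / dd ^ 2 < sqrt c.
Proof.
  intros Hc Hd.
  assert (Hq : 0 < Rpower c (- / 4)) by apply exp_pos.
  assert (Hq2 : Rpower c (- / 4) ^ 2 = / sqrt c).
  { rewrite <- Rsqr_pow2. unfold Rsqr. rewrite <- Rpower_plus.
    replace (- / 4 + - / 4) with (- / 2) by field.
    rewrite Rpower_Ropp, Rpower_sqrt by exact Hc. reflexivity. }
  assert (Hlt : / sqrt c < dd ^ 2) by (rewrite <- Hq2; nra).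
  split; [apply Rinv_0_lt_compat; nra |].
  rewrite <- (Rinv_inv (sqrt c)). apply Rinv_lt_contravar; [| exact Hlt].
  apply Rmult_lt_0_compat; [apply Rinv_0_lt_compat, sqrt_lt_R0 |]; nra.
Qed.

Lemma inv_sqr_lt a b : 0 < a -> a < b -> / b ^ 2 < / a ^ 2.
Proof.
  intros Ha Hab. apply Rinv_lt_contravar; [| nra].
  apply Rmult_lt_0_compat; apply pow_lt; lra.
Qed.

Lemma inv_sub_lt a t1 t2 : 0 < (t1 - a) * (t2 - a) -> t1 < t2 -> / (t2 - a) < / (t1 - a).
Proof.
  intros Hpos Hlt.
  assert (Hdiff : / (t1 - a) - / (t2 - a) = (t2 - t1) / ((t1 - a) * (t2 - a))).
  { field. split; intros Z; rewrite Z in Hpos; lra. }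
  pose proof (Rdiv_lt_0_compat (t2 - t1) _ ltac:(lra) Hpos). lra.
Qed.

Definition calT_inv (c t : R) : R := 1 + / c + / c * t + / t.

Lemma lam_plus_calT_inv c : 0 < c -> lam_plus c = calT_inv c (sqrt c).
Proof.
  intros Hc. assert (Hs : 0 < sqrt c) by (apply sqrt_lt_R0; lra).
  unfold lam_plus, calT_inv. rewrite <- (sqrt_sqrt c) at 2 3 by lra.
  field. lra.
Qed.

Lemma pfun_calT_inv c dd : 0 < c -> dd <> 0 -> pfun c dd = calT_inv c (/ dd ^ 2).
Proof. intros. unfold pfun, calT_inv. field. lra. Qed.

Lemma calT_inv_decreasing c s t : 0 < c -> 0 < s -> s < t -> t <= sqrt c ->
  calT_inv c t < calT_inv c s.
Proof.
  intros Hc Hs Hst Ht.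
  assert (Hprod : s * t < c).
  { assert (Htt : t * t <= sqrt c * sqrt c) by (apply Rmult_le_compat; lra).
    rewrite sqrt_sqrt in Htt by lra. nra. }
  assert (Hinv : / c < / (s * t)).
  { apply Rinv_lt_contravar; [apply Rmult_lt_0_compat; nra | exact Hprod]. }
  assert (Hdiff : calT_inv c s - calT_inv c t = (t - s) * (/ (s * t) - / c)).
  { unfold calT_inv. field. lra. }
  assert (0 < (t - s) * (/ (s * t) - / c)) by (apply Rmult_lt_0_compat; lra).
  lra.
Qed.

Lemma lam_plus_lt_calT_inv c t : 0 < c -> 0 < t < sqrt c -> lam_plus c < calT_inv c t.
Proof. intros Hc Ht. rewrite lam_plus_calT_inv by exact Hc. apply calT_inv_decreasing; lra. Qed.

Lemma calT_inv_inj c s t : 0 < c -> 0 < s <= sqrt c -> 0 < t <= sqrt c ->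
  calT_inv c s = calT_inv c t -> s = t.
Proof.
  intros Hc Hs Ht Heq.
  destruct (Rtotal_order s t) as [Hlt | [Hst | Hlt]]; auto.
  - pose proof (calT_inv_decreasing c s t Hc (proj1 Hs) Hlt (proj2 Ht)). lra.
  - pose proof (calT_inv_decreasing c t s Hc (proj1 Ht) Hlt (proj2 Hs)). lra.
Qed.

Lemma lam_plus_minus_prod c x : 0 < c ->
  (x - lam_plus c) * (x - lam_minus c) = (x - 1 - / c) ^ 2 - 4 * / c.
Proof. intros Hc. unfold lam_plus, lam_minus. rewrite (inv_sqrt_sqr c Hc). ring. Qed.

Lemma lam_plus_lt c x : 0 < c -> lam_plus c < x -> 2 * / sqrt c < x - 1 - / c.
Proof. intros Hc Hx. unfold lam_plus in Hx. rewrite (inv_sqrt_sqr c Hc). nra. Qed.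

Lemma lam_prod_pos c x : 0 < c -> lam_plus c < x -> 0 < (x - lam_plus c) * (x - lam_minus c).
Proof.
  intros Hc Hx. pose proof (lam_plus_lt c x Hc Hx). rewrite lam_plus_minus_prod by lra.
  rewrite (inv_sqrt_sqr c Hc) in *. pose proof (Rinv_0_lt_compat _ (sqrt_lt_R0 c Hc)). nra.
Qed.

Lemma calT_bounds c x : 0 < c -> lam_plus c < x -> 0 < calT c x < sqrt c.
Proof.
  intros Hc Hx. pose proof (lam_plus_lt c x Hc Hx) as Hu.
  unfold calT. rewrite lam_plus_minus_prod by lra.
  replace (x - (1 + / c)) with (x - 1 - / c) by ring.
  set (u := x - 1 - / c) in *.
  assert (Hr : 0 < / sqrt c) by (apply Rinv_0_lt_compat, sqrt_lt_R0; lra).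
  rewrite (inv_sqrt_sqr c Hc). set (r := / sqrt c) in *.
  assert (Hw2 : sqrt (u ^ 2 - 4 * r ^ 2) ^ 2 = u ^ 2 - 4 * r ^ 2) by (apply pow2_sqrt; nra).
  pose proof (sqrt_pos (u ^ 2 - 4 * r ^ 2)) as Hw0.
  set (w := sqrt (u ^ 2 - 4 * r ^ 2)) in *.
  assert (Hwu : u - 2 * r < w < u) by nra.
  replace (sqrt c) with (/ r) by (unfold r; rewrite Rinv_inv; reflexivity).
  split.
  - apply Rdiv_lt_0_compat; nra.
  - apply (Rmult_lt_reg_r (2 * r ^ 2)); [nra|].
    unfold Rdiv. rewrite Rmult_assoc, Rinv_l by nra. field_simplify; nra.
Qed.

Lemma calT_quadratic c x : 0 < c -> lam_plus c < x ->
  / c * calT c x ^ 2 - (x - 1 - / c) * calT c x + 1 = 0.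
Proof.
  intros Hc Hx. pose proof (lam_prod_pos c x Hc Hx) as Hpos.
  unfold calT. rewrite lam_plus_minus_prod in * by lra.
  replace (x - (1 + / c)) with (x - 1 - / c) by ring.
  set (u := x - 1 - / c) in *.
  assert (Hw2 : sqrt (u ^ 2 - 4 * / c) ^ 2 = u ^ 2 - 4 * / c) by (apply pow2_sqrt; lra).
  field_simplify; [|lra]. rewrite Hw2. field. lra.
Qed.

Lemma calT_inv_calT c x : 0 < c -> lam_plus c < x -> calT_inv c (calT c x) = x.
Proof.
  intros Hc Hx. pose proof (calT_quadratic c x Hc Hx) as Hq.
  pose proof (calT_bounds c x Hc Hx) as [HT _].
  unfold calT_inv. set (t := calT c x) in *.
  replace (/ t) with (x - 1 - / c - / c * t); [ring|].
  apply (Rmult_eq_reg_l t); [|lra]. rewrite Rinv_r by lra. nra.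
Qed.

Lemma calT_eq_iff c x t : 0 < c -> lam_plus c < x -> 0 < t <= sqrt c ->
  (calT c x = t <-> x = calT_inv c t).
Proof.
  intros Hc Hx Ht. pose proof (calT_bounds c x Hc Hx).
  split; intros Heq.
  - rewrite <- Heq. symmetry. apply calT_inv_calT; auto.
  - apply (calT_inv_inj c); [auto | lra | auto |]. rewrite calT_inv_calT; auto.
Qed.

Lemma calT_decreasing c x y : 0 < c -> lam_plus c < x -> x < y -> calT c y < calT c x.
Proof.
  intros Hc Hx Hxy.
  pose proof (calT_bounds c x Hc Hx) as Hbx. pose proof (calT_bounds c y Hc ltac:(lra)) as Hby.
  destruct (Rtotal_order (calT c y) (calT c x)) as [Hlt | [Heq | Hgt]]; auto; exfalso.
  - apply (f_equal (calT_inv c)) in Heq. rewrite !calT_inv_calT in Heq; lra.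
  - pose proof (calT_inv_decreasing c _ _ Hc (proj1 Hbx) Hgt (Rlt_le _ _ (proj2 Hby))) as Hd.
    rewrite !calT_inv_calT in Hd; lra.
Qed.

Lemma ex_derive_calT c x : 0 < c -> lam_plus c < x -> ex_derive (calT c) x.
Proof.
  intros Hc Hx. unfold calT. auto_derive. exact (lam_prod_pos c x Hc Hx).
Qed.

Lemma calT_derive_neq_0 c x D : 0 < c -> lam_plus c < x -> is_derive (calT c) x D -> D <> 0.
Proof.
  intros Hc Hx HD.
  pose proof (calT_bounds c x Hc Hx) as [HT _].
  (* h o T = id near x, so the chain rule gives h'(T x) * D = 1. *)
  assert (Hid : is_derive (fun y => calT_inv c (calT c y)) x 1).
  { apply (is_derive_ext_loc (fun y => y)); [|auto_derive; reflexivity].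
    apply (filter_imp (fun y => lam_plus c < y)); [|apply open_gt; exact Hx].
    intros y Hy. symmetry. apply calT_inv_calT; auto. }
  assert (Hcomp : is_derive (fun y => calT_inv c (calT c y)) x (D * (/ c - / calT c x ^ 2))).
  { apply (is_derive_comp (calT_inv c)); [|exact HD].
    unfold calT_inv. auto_derive; [lra | field; lra]. }
  apply is_derive_unique in Hid. apply is_derive_unique in Hcomp.
  intros ->. rewrite Hid, Rmult_0_l in Hcomp. lra.
Qed.

Section RootPoly.

Variable e : nat -> R.

Fixpoint root_poly (n : nat) (t : R) : R :=
  match n with
  | O => 1
  | S m => root_poly m t * (t - e (S m))
  end.

Fixpoint root_poly_der (n : nat) (t : R) : R :=
  match n with
  | O => 0
  | S m => root_poly_der m t * (t - e (S m)) + root_poly m t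
  end.

Fixpoint root_poly_logder (n : nat) (t : R) : R :=
  match n with
  | O => 0
  | S m => root_poly_logder m t + / (t - e (S m))
  end.

Definition increasing_upto (n : nat) : Prop :=
  forall i j, (1 <= i)%nat -> (i < j <= n)%nat -> e i < e j.

Lemma increasing_upto_succ n :
  (forall i, (1 <= i < n)%nat -> e i < e (S i)) -> increasing_upto n.
Proof.
  intros Hsucc i j Hi Hij. destruct Hij as [Hij Hjn].
  induction Hij as [|j Hij IH].
  - apply Hsucc; lia.
  - apply Rlt_trans with (e j); [apply IH; lia | apply Hsucc; lia].
Qed.

Lemma is_derive_root_poly n t : is_derive (root_poly n) t (root_poly_der n t).
Proof.
  induction n as [|m IH]; simpl.
  - auto_derive; reflexivity.
  - replace (root_poly_der m t * (t - e (S m)) + root_poly m t)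
      with (root_poly_der m t * (t - e (S m)) + root_poly m t * 1) by ring.
    apply (Derive.is_derive_mult (root_poly m) (fun y => y - e (S m))); [exact IH |].
    auto_derive; reflexivity.
Qed.

Lemma root_poly_eq_0 n t : root_poly n t = 0 <-> exists k, (1 <= k <= n)%nat /\ t = e k.
Proof.
  induction n as [|m IH]; simpl.
  - split; [intros; lra | intros [k [Hk _]]; lia].
  - split.
    + intros H0. apply Rmult_integral in H0. destruct H0 as [H0 | H0].
      * destruct (proj1 IH H0) as [k [Hk Ht]]. exists k. split; [lia | exact Ht].
      * exists (S m). split; [lia | lra].
    + intros [k [Hk Ht]]. destruct (Nat.eq_dec k (S m)) as [-> | Hne].
      * rewrite Ht. ring.
      * rewrite (proj2 IH); [ring |]. exists k. split; [lia | exact Ht].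
Qed.

Lemma root_poly_der_logder n t : (forall k, (1 <= k <= n)%nat -> t <> e k) ->
  root_poly_der n t = root_poly n t * root_poly_logder n t.
Proof.
  induction n as [|m IH]; intros Hne; simpl; [ring |].
  rewrite IH by (intros k Hk; apply Hne; lia).
  assert (t - e (S m) <> 0) by (specialize (Hne (S m) ltac:(lia)); lra).
  field. assumption.
Qed.

Lemma root_poly_der_root n j : increasing_upto n -> (1 <= j <= n)%nat -> root_poly_der n (e j) <> 0.
Proof.
  revert j. induction n as [|m IH]; intros j Hinc Hj; [lia |]. simpl.
  destruct (Nat.eq_dec j (S m)) as [-> | Hne].
  - rewrite Rminus_diag, Rmult_0_r, Rplus_0_l.
    intros H0. apply root_poly_eq_0 in H0. destruct H0 as [k [Hk Hek]].
    pose proof (Hinc k (S m) ltac:(lia) ltac:(lia)). lra.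
  - assert (Hroot : root_poly m (e j) = 0).
    { apply root_poly_eq_0. exists j. split; [lia | reflexivity]. }
    rewrite Hroot, Rplus_0_r. apply Rmult_integral_contrapositive. split.
    + apply IH; [intros i k Hi Hik; apply Hinc; lia | lia].
    + pose proof (Hinc j (S m) ltac:(lia) ltac:(lia)). lra.
Qed.

Lemma root_poly_logder_decreasing n t1 t2 : (1 <= n)%nat ->
  (forall k, (1 <= k <= n)%nat -> 0 < (t1 - e k) * (t2 - e k)) ->
  t1 < t2 -> root_poly_logder n t2 < root_poly_logder n t1.
Proof.
  induction n as [|m IH]; intros Hn Hside Hlt; [lia |]. simpl.
  pose proof (inv_sub_lt (e (S m)) t1 t2 (Hside (S m) ltac:(lia)) Hlt).
  destruct m as [|m]; [simpl; lra |].
  pose proof (IH ltac:(lia) ltac:(intros k Hk; apply Hside; lia) Hlt). lra.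
Qed.

Lemma root_poly_logder_neg n t : (1 <= n)%nat -> (forall k, (1 <= k <= n)%nat -> t < e k) ->
  root_poly_logder n t < 0.
Proof.
  induction n as [|m IH]; intros Hn Hbelow; [lia |]. simpl.
  pose proof (Hbelow (S m) ltac:(lia)).
  assert (/ (t - e (S m)) < 0) by (apply Rinv_lt_0_compat; lra).
  destruct m as [|m]; [simpl; lra |].
  pose proof (IH ltac:(lia) ltac:(intros k Hk; apply Hbelow; lia)). lra.
Qed.

Lemma root_poly_logder_pos n t : (1 <= n)%nat -> (forall k, (1 <= k <= n)%nat -> e k < t) ->
  0 < root_poly_logder n t.
Proof.
  induction n as [|m IH]; intros Hn Habove; [lia |]. simpl.
  pose proof (Habove (S m) ltac:(lia)).
  assert (0 < / (t - e (S m))) by (apply Rinv_0_lt_compat; lra).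
  destruct m as [|m]; [simpl; lra |].
  pose proof (IH ltac:(lia) ltac:(intros k Hk; apply Habove; lia)). lra.
Qed.

Lemma increasing_upto_le n i j :
  increasing_upto n -> (1 <= i)%nat -> (i <= j <= n)%nat -> e i <= e j.
Proof.
  intros Hinc Hi Hij. destruct (Nat.eq_dec i j) as [-> | Hne]; [lra |].
  left. apply Hinc; lia.
Qed.

Lemma between_roots n t : (1 <= n)%nat -> increasing_upto n -> e 1%nat < t < e n ->
  (forall k, (1 <= k <= n)%nat -> t <> e k) ->
  exists i, (1 <= i < n)%nat /\ e i < t < e (S i).
Proof.
  induction n as [|m IH]; intros Hn Hinc Ht Hne; [lia |].
  destruct m as [|m]; [lra |].
  destruct (Rtotal_order t (e (S m))) as [Hlt | [Heq | Hgt]].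
  - destruct IH as [i [Hi Hgap]]; [lia | intros i j Hi Hij; apply Hinc; lia | lra |
      intros k Hk; apply Hne; lia |].
    exists i. split; [lia | exact Hgap].
  - exfalso. apply (Hne (S m)); [lia | exact Heq].
  - exists (S m). split; [lia | lra].
Qed.

Lemma gap_same_side n i t1 t2 : increasing_upto n -> (1 <= i < n)%nat ->
  e i < t1 < e (S i) -> e i < t2 < e (S i) ->
  forall k, (1 <= k <= n)%nat -> 0 < (t1 - e k) * (t2 - e k).
Proof.
  intros Hinc Hi H1 H2 k Hk.
  destruct (Nat.le_gt_cases k i) as [Hki | Hik].
  - pose proof (increasing_upto_le n k i Hinc ltac:(lia) ltac:(lia)). nra.
  - pose proof (increasing_upto_le n (S i) k Hinc ltac:(lia) ltac:(lia)). nra.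
Qed.

Lemma root_poly_der_eq_0_not_root n t : increasing_upto n -> root_poly_der n t = 0 ->
  forall k, (1 <= k <= n)%nat -> t <> e k.
Proof. intros Hinc Hder k Hk ->. exact (root_poly_der_root n k Hinc Hk Hder). Qed.

Lemma root_poly_der_eq_0_logder n t : increasing_upto n -> root_poly_der n t = 0 ->
  root_poly_logder n t = 0.
Proof.
  intros Hinc Hder. pose proof (root_poly_der_eq_0_not_root n t Hinc Hder) as Hne.
  rewrite root_poly_der_logder in Hder by exact Hne.
  apply Rmult_integral in Hder. destruct Hder as [Hp | Hl]; [exfalso | exact Hl].
  apply root_poly_eq_0 in Hp. destruct Hp as [k [Hk Ht]]. exact (Hne k Hk Ht).
Qed.

Lemma root_poly_der_eq_0_in_gap n t : (1 <= n)%nat -> increasing_upto n ->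
  root_poly_der n t = 0 -> exists i, (1 <= i < n)%nat /\ e i < t < e (S i).
Proof.
  intros Hn Hinc Hder.
  pose proof (root_poly_der_eq_0_not_root n t Hinc Hder) as Hne.
  pose proof (root_poly_der_eq_0_logder n t Hinc Hder) as Hl.
  destruct (Rlt_or_le t (e 1%nat)) as [Hlo | Hlo].
  { exfalso. assert (root_poly_logder n t < 0); [| lra].
    apply root_poly_logder_neg; [exact Hn |]. intros k Hk.
    pose proof (increasing_upto_le n 1 k Hinc ltac:(lia) ltac:(lia)). lra. }
  destruct (Rlt_or_le (e n) t) as [Hhi | Hhi].
  { exfalso. assert (0 < root_poly_logder n t); [| lra].
    apply root_poly_logder_pos; [exact Hn |]. intros k Hk.
    pose proof (increasing_upto_le n k n Hinc ltac:(lia) ltac:(lia)). lra. }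
  apply between_roots; [exact Hn | exact Hinc | | exact Hne].
  pose proof (Hne 1%nat ltac:(lia)). pose proof (Hne n ltac:(lia)). lra.
Qed.

Lemma root_poly_der_eq_0_gap_unique n i t1 t2 : increasing_upto n -> (1 <= i < n)%nat ->
  e i < t1 < e (S i) -> e i < t2 < e (S i) ->
  root_poly_der n t1 = 0 -> root_poly_der n t2 = 0 -> t1 = t2.
Proof.
  intros Hinc Hi H1 H2 Hd1 Hd2.
  pose proof (root_poly_der_eq_0_logder n t1 Hinc Hd1).
  pose proof (root_poly_der_eq_0_logder n t2 Hinc Hd2).
  destruct (Rtotal_order t1 t2) as [Hlt | [Heq | Hgt]]; [exfalso | exact Heq | exfalso].
  - pose proof (root_poly_logder_decreasing n t1 t2 ltac:(lia)
      (gap_same_side n i t1 t2 Hinc Hi H1 H2) Hlt). lra.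
  - pose proof (root_poly_logder_decreasing n t2 t1 ltac:(lia)
      (gap_same_side n i t2 t1 Hinc Hi H2 H1) Hgt). lra.
Qed.

Lemma root_poly_der_gap_zero n i : increasing_upto n -> (1 <= i < n)%nat ->
  exists z, e i < z < e (S i) /\ root_poly_der n z = 0.
Proof.
  intros Hinc Hi.
  assert (Hlt : e i < e (S i)) by (apply Hinc; lia).
  destruct (MVT_gen (root_poly n) (e i) (e (S i)) (root_poly_der n)) as [z [Hz Hmvt]].
  - intros x _. apply is_derive_root_poly.
  - intros x _. apply continuity_pt_filterlim, (ex_derive_continuous (root_poly n)).
    eexists. apply is_derive_root_poly.
  - rewrite Rmin_left, Rmax_right in Hz by lra.
    rewrite (proj2 (root_poly_eq_0 n (e i))), (proj2 (root_poly_eq_0 n (e (S i)))) in Hmvt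
      by (eexists; split; [| reflexivity]; lia).
    assert (Hder : root_poly_der n z = 0).
    { rewrite Rminus_diag in Hmvt.
      destruct (Rmult_integral _ _ (eq_sym Hmvt)); [assumption | lra]. }
    pose proof (root_poly_der_eq_0_not_root n z Hinc Hder i ltac:(lia)).
    pose proof (root_poly_der_eq_0_not_root n z Hinc Hder (S i) ltac:(lia)).
    exists z. split; [lra | exact Hder].
Qed.

Lemma root_poly_critical_points n : (1 <= n)%nat -> increasing_upto n ->
  exists zs : nat -> R,
    (forall i, (1 <= i < n)%nat -> e i < zs i < e (S i) /\ root_poly_der n (zs i) = 0) /\
    (forall t, root_poly_der n t = 0 -> exists i, (1 <= i < n)%nat /\ t = zs i).
Proof.
  intros Hn Hinc.
  destruct (choice (fun i z => (1 <= i < n)%nat -> e i < z < e (S i) /\ root_poly_der n z = 0))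
    as [zs Hzs].
  { intros i. destruct (Nat.le_gt_cases 1 i), (Nat.le_gt_cases n i); try (exists 0; intros; lia).
    destruct (root_poly_der_gap_zero n i Hinc ltac:(lia)) as [z Hz]. exists z. intros _. exact Hz. }
  exists zs. split; [exact Hzs |].
  intros t Hder. destruct (root_poly_der_eq_0_in_gap n t Hn Hinc Hder) as [i [Hi Hgap]].
  exists i. split; [exact Hi |].
  destruct (Hzs i Hi) as [Hzgap Hzder].
  exact (root_poly_der_eq_0_gap_unique n i t (zs i) Hinc Hi Hgap Hzgap Hder Hzder).
Qed.

End RootPoly.

Section RootPolyCalT.

Variables (c : R) (e : nat -> R) (n : nat).
Hypothesis Hc : 0 < c.
Hypothesis He : forall k, (1 <= k <= n)%nat -> 0 < e k < sqrt c.

Lemma root_poly_calT_eq_0 x : lam_plus c < x ->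
  (root_poly e n (calT c x) = 0 <-> exists k, (1 <= k <= n)%nat /\ x = calT_inv c (e k)).
Proof.
  intros Hx. rewrite root_poly_eq_0.
  assert (Hiff : forall k, (1 <= k <= n)%nat -> calT c x = e k <-> x = calT_inv c (e k)).
  { intros k Hk. pose proof (He k Hk). apply calT_eq_iff; [exact Hc | exact Hx | lra]. }
  split; intros [k [Hk Heq]]; exists k; split; try exact Hk; apply (Hiff k Hk); exact Heq.
Qed.

Lemma is_derive_root_poly_calT x : lam_plus c < x ->
  exists D, D <> 0 /\
    is_derive (fun y => root_poly e n (calT c y)) x (D * root_poly_der e n (calT c x)).
Proof.
  intros Hx. destruct (ex_derive_calT c x Hc Hx) as [D HD].
  exists D. split; [exact (calT_derive_neq_0 c x D Hc Hx HD) |].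
  exact (is_derive_comp (root_poly e n) (calT c) x _ D (is_derive_root_poly e n _) HD).
Qed.

Lemma root_poly_calT_critical_iff x : lam_plus c < x ->
  (is_derive (fun y => root_poly e n (calT c y)) x 0 <-> root_poly_der e n (calT c x) = 0).
Proof.
  intros Hx. destruct (is_derive_root_poly_calT x Hx) as [D [HD0 HD]]. split.
  - intros H0. apply is_derive_unique in H0. apply is_derive_unique in HD.
    rewrite H0 in HD. destruct (Rmult_integral _ _ (eq_sym HD)); [contradiction | assumption].
  - intros Hder. rewrite Hder, Rmult_0_r in HD. exact HD.
Qed.

Hypothesis Hinc : increasing_upto e n.

Lemma root_poly_calT_critical_points : (1 <= n)%nat ->
  exists xs : nat -> R,
    (forall i, (1 <= i < n)%nat -> calT_inv c (e (S i)) < xs i < calT_inv c (e i) /\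
       is_derive (fun y => root_poly e n (calT c y)) (xs i) 0) /\
    (forall y, lam_plus c < y -> is_derive (fun y => root_poly e n (calT c y)) y 0 ->
       exists i, (1 <= i < n)%nat /\ y = xs i).
Proof.
  intros Hn. destruct (root_poly_critical_points e n Hn Hinc) as [zs [Hzs Huniq]].
  exists (fun i => calT_inv c (zs i)). split.
  - intros i Hi. destruct (Hzs i Hi) as [Hgap Hder].
    pose proof (He i ltac:(lia)). pose proof (He (S i) ltac:(lia)).
    assert (Hx : lam_plus c < calT_inv c (zs i)) by (apply lam_plus_lt_calT_inv; lra).
    split; [split; apply calT_inv_decreasing; lra |].
    apply root_poly_calT_critical_iff; [exact Hx |].
    rewrite (proj2 (calT_eq_iff c _ (zs i) Hc Hx ltac:(lra)) eq_refl). exact Hder.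
  - intros y Hy Hcrit. apply root_poly_calT_critical_iff in Hcrit; [| exact Hy].
    destruct (Huniq _ Hcrit) as [i [Hi Hyi]]. exists i. split; [exact Hi |].
    rewrite <- Hyi. symmetry. apply calT_inv_calT; assumption.
Qed.

End RootPolyCalT.

Lemma Tprod_root_poly c d n :
  Tprod c d n = fun x => root_poly (fun k => / d k ^ 2) n (calT c x).
Proof.
  apply functional_extensionality. intros x.
  induction n as [|m IH]; simpl; [reflexivity | rewrite IH; reflexivity].
Qed.

Theorem lemma4p6 (c : R) (s : nat) (d : nat -> R) :
  0 < c ->
  (1 <= s)%nat ->
  (forall i : nat, (1 <= i < s)%nat -> d (S i) < d i) ->
  (forall i : nat, (1 <= i <= s)%nat -> Rpower c (- / 4) < d i) ->
  (* (1) the solutions of T^s(x) = 0 on (lam+, oo) are exactly the s distinct p_i *)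
  ((forall i : nat, (1 <= i <= s)%nat -> lam_plus c < pfun c (d i)) /\
   (forall i : nat, (1 <= i < s)%nat -> pfun c (d (S i)) < pfun c (d i)) /\
   (forall x : R, lam_plus c < x ->
      (Tprod c d s x = 0 <-> exists i : nat, (1 <= i <= s)%nat /\ x = pfun c (d i)))) /\
  (* (2) T^s is differentiable on (lam+, oo) and its critical points there are
         exactly x_1, ..., x_{s-1}, with x_i in (p_{i+1}, p_i) *)
  ((forall x : R, lam_plus c < x -> ex_derive (Tprod c d s) x) /\
   exists xs : nat -> R,
     (forall i : nat, (1 <= i < s)%nat ->
        pfun c (d (S i)) < xs i < pfun c (d i) /\ is_derive (Tprod c d s) (xs i) 0) /\
     (forall y : R, lam_plus c < y -> is_derive (Tprod c d s) y 0 ->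
        exists i : nat, (1 <= i < s)%nat /\ y = xs i)) /\
  (* (3) T is strictly decreasing on (lam+, oo) *)
  (forall x y : R, lam_plus c < x -> x < y -> calT c y < calT c x).
Proof.
  intros Hc Hs Hdec Hlow.
  rewrite Tprod_root_poly. set (e := fun k => / d k ^ 2).
  assert (Hd : forall k, (1 <= k <= s)%nat -> 0 < d k).
  { intros k Hk. pose proof (Hlow k Hk). pose proof (exp_pos (- / 4 * ln c)).
    unfold Rpower in *. lra. }
  assert (He : forall k, (1 <= k <= s)%nat -> 0 < e k < sqrt c).
  { intros k Hk. apply inv_sqr_bounds; [exact Hc | apply Hlow, Hk]. }
  assert (Hinc : increasing_upto e s).
  { apply increasing_upto_succ. intros i Hi. apply inv_sqr_lt; [apply Hd; lia | apply Hdec, Hi]. }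
  assert (Hp : forall k, (1 <= k <= s)%nat -> pfun c (d k) = calT_inv c (e k)).
  { intros k Hk. apply pfun_calT_inv; [exact Hc | apply Rgt_not_eq, Hd, Hk]. }
  split; [split; [| split] | split; [split |]].
  - intros i Hi. rewrite Hp by exact Hi. apply lam_plus_lt_calT_inv, He; assumption.
  - intros i Hi. rewrite !Hp by lia.
    pose proof (He i ltac:(lia)). pose proof (He (S i) ltac:(lia)).
    apply calT_inv_decreasing; [exact Hc | lra | apply Hinc; lia | lra].
  - intros x Hx. rewrite (root_poly_calT_eq_0 c e s Hc He x Hx).
    split; intros [k [Hk Hxk]]; exists k; split; try exact Hk; rewrite (Hp k Hk) in *; exact Hxk.
  - intros x Hx. destruct (is_derive_root_poly_calT c e s Hc x Hx) as [D [_ HD]].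
    eexists. exact HD.
  - destruct (root_poly_calT_critical_points c e s Hc He Hinc Hs) as [xs [Hxs Huniq]].
    exists xs. split; [| exact Huniq]. intros i Hi. rewrite !Hp by lia. apply Hxs, Hi.
  - intros x y Hx Hxy. apply calT_decreasing; assumption.
Qed.
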